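(* Let $D$ be a divisible periodic subgroup of an abelian group $A$ and let $\varphi$ be an endomorphism of $A$. If $\varphi$ is inertial or left-inertial, then $\varphi(D)\subseteq D$ and $\varphi$ acts on $D$ as a multiplication.
   Context: Abelian groups are written additively. An endomorphism $\varphi$ of $A$ is inertial if $(\varphi(X)+X)/X$ is finite for every subgroup $X\le A$, and left-inertial if $X/(X\cap\varphi(X))$ is finite for every $X\le A$. On a periodic group, a multiplication is the componentwise action of an element of $\prod_p\mathbb{Z}_p$ ($p$-adic integers) on the $p$-components. *)

From HB Require Import structures.
From mathcomp Require Import all_boot all_order all_algebra.
Set Implicit Arguments. Unset Strict Implicit. Unset Printing Implicit Defensive.
Import GRing.Theory.
Local Open Scope ring_scope.

Section Defs.
Variable A : zmodType.

Definition is_subgroup (X : A -> Prop) : Prop :=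
  X 0 /\ (forall x y, X x -> X y -> X (x - y)).

(* Y/(Y ∩ X) is finite: Y is covered by finitely many cosets of X
   (when X ⊆ Y this is exactly: the quotient Y/X is finite). *)
Definition fin_quot (Y X : A -> Prop) : Prop :=
  exists s : seq A, forall y, Y y -> exists2 a, a \in s & X (y - a).

Definition image_of (f : A -> A) (X : A -> Prop) : A -> Prop :=
  fun y => exists2 u, X u & y = f u.

(* φ is inertial: (φ(X)+X)/X finite for every subgroup X *)
Definition inertial (f : A -> A) : Prop :=
  forall X, is_subgroup X ->
    fin_quot (fun y => exists u v, [/\ X u, X v & y = f u + v]) X.

(* φ is left-inertial: X/(X ∩ φ(X)) finite for every subgroup X *)
Definition left_inertial (f : A -> A) : Prop :=
  forall X, is_subgroup X ->
    fin_quot X (fun y => X y /\ image_of f X y).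

Definition periodic (D : A -> Prop) : Prop :=
  forall x, D x -> exists2 n : nat, (0 < n)%N & x *+ n = 0.

Definition divisible (D : A -> Prop) : Prop :=
  forall x (n : nat), D x -> (0 < n)%N -> exists2 y, D y & y *+ n = x.
End Defs.

(* A p-adic integer, as an element of the inverse limit of the Z/p^k:
   a coherent sequence of residues a k mod p^k. *)
Definition is_padic (p : nat) (a : nat -> nat) : Prop :=
  forall k, (a k < p ^ k)%N /\ (a k.+1 = a k %[mod p ^ k])%N.

(* y = α·x where α = (α p)_p ∈ ∏_p Z_p acts componentwise on the p-components
   of the periodic element x: if n x = 0 (n > 0), α acts as any integer c with
   c ≡ α_p mod p^(v_p n) for every prime p | n. *)
Definition padic_mult (A : zmodType) (alpha : nat -> nat -> nat) (x y : A) : Prop :=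
  exists n : nat, [/\ (0 < n)%N, x *+ n = 0 &
    exists c : nat, (forall p, prime p -> p %| n ->
        c = alpha p (logn p n) %[mod p ^ logn p n])%N /\ y = x *+ c].

From HB Require Import structures.
From mathcomp Require Import all_boot all_order all_algebra.
From Stdlib Require Import ClassicalEpsilon.
Set Implicit Arguments. Unset Strict Implicit.
Import GRing.Theory.
Local Open Scope ring_scope.

(* Fix x in D and let X be the union of the cycles of a division chain of x in D:
   X is a divisible, locally cyclic subgroup containing x.  A divisible group has
   no proper subgroup of finite index, so inertiality gives phi(x) in X and
   left-inertiality gives x in phi(X); in both cases x and phi(x) lie in a common
   finite cycle where the annihilator of x is contained in that of phi(x), hence
   phi(x) is an integer multiple of x.  For such a power endomorphism the
   multiplier on the p^k-torsion of D is a single residue mod p^k, fixed by any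
   element of order p^k; divisibility of D provides such elements for every k as
   soon as D has p-torsion, which makes the residues a p-adic integer, and the
   Chinese remainder theorem assembles them on the n-torsion. *)

Section Subgroup.
Variables (A : zmodType) (D : A -> Prop).
Hypothesis sD : is_subgroup D.

Lemma subgroup0 : D 0. Proof. by case: sD. Qed.

Lemma subgroupB x y : D x -> D y -> D (x - y). Proof. exact: (proj2 sD). Qed.

Lemma subgroupN x : D x -> D (- x).
Proof. by move=> Dx; rewrite -sub0r; apply: subgroupB => //; apply: subgroup0. Qed.

Lemma subgroupD x y : D x -> D y -> D (x + y).
Proof. by move=> Dx Dy; rewrite -[y]opprK; apply/subgroupB/subgroupN. Qed.

Lemma subgroupMn x n : D x -> D (x *+ n).
Proof.
move=> Dx; elim: n => [|n IHn]; first by rewrite mulr0n; apply: subgroup0.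
by rewrite mulrS; apply: subgroupD.
Qed.

Lemma subgroupMz x (z : int) : D x -> D (x *~ z).
Proof.
by move=> Dx; case: z => n; rewrite ?NegzE ?mulrNz; [|apply: subgroupN]; apply: subgroupMn.
Qed.

End Subgroup.

Section Torsion.
Variable A : zmodType.
Implicit Types (x y : A) (m n : nat).

Lemma mulrn_dvd_eq0 x n m : x *+ n = 0 -> (n %| m)%N -> x *+ m = 0.
Proof. by move=> xn /dvdnP [q ->]; rewrite mulnC mulrnA xn mul0rn. Qed.

Lemma mulrz_dvd_eq0 x n (t : int) : x *+ n = 0 -> (n%:Z %| t)%Z -> x *~ t = 0.
Proof. by move=> xn /dvdzP [q ->]; rewrite mulrC mulrzA -pmulrn xn mul0rz. Qed.

Lemma mulrn_modn x n a : x *+ n = 0 -> x *+ a = x *+ (a %% n).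
Proof. by move=> xn; rewrite {1}(divn_eq a n) mulrnDr mulnC mulrnA xn mul0rn add0r. Qed.

Lemma mulrn_eqmod x n a b : x *+ n = 0 -> (a = b %[mod n])%N -> x *+ a = x *+ b.
Proof. by move=> xn eab; rewrite (mulrn_modn a xn) eab -mulrn_modn. Qed.

Lemma mulrz_eq0_norm x (z : int) : (x *~ z == 0) = (x *+ `|z|%N == 0).
Proof. by case: z => n; rewrite ?NegzE ?mulrNz ?oppr_eq0 -pmulrn. Qed.

Lemma exists_order_dvdz x n : (0 < n)%N -> x *+ n = 0 ->
  exists2 m0, (0 < m0)%N & forall t : int, x *~ t = 0 <-> (m0%:Z %| t)%Z.
Proof.
move=> n_gt0 xn.
have exP : exists m, (0 < m)%N && (x *+ m == 0) by exists n; rewrite n_gt0 xn eqxx.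
case: (ex_minnP exP) => m0 /andP [m0_gt0 /eqP xm0] m0_min.
exists m0 => // t; split; last exact: mulrz_dvd_eq0.
move/eqP; rewrite mulrz_eq0_norm (mulrn_modn _ xm0) dvdzE => /eqP xr.
apply/negPn/negP; rewrite /dvdn -lt0n => r_gt0.
have /m0_min : (0 < `|t| %% m0)%N && (x *+ (`|t| %% m0) == 0) by rewrite r_gt0 xr eqxx.
by rewrite leqNgt ltn_mod m0_gt0.
Qed.

(* Subgroups of a finite cycle are determined by their annihilators. *)
Lemma cycle_mulz_of_ann x n (a b : int) : (0 < n)%N -> x *+ n = 0 ->
  (forall j, x *~ a *+ j = 0 -> x *~ b *+ j = 0) -> exists c : int, x *~ b = x *~ a *~ c.
Proof.
move=> n_gt0 xn ann_ab; have [m0 m0_gt0 ord_x] := exists_order_dvdz n_gt0 xn.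
have [u [v duv]] := Bezoutz a m0%:Z; set d := gcdz a m0 in duv.
have xd : x *~ d = x *~ a *~ u.
  rewrite -duv mulrzDr (proj2 (ord_x (v * m0%:Z))) ?dvdz_mull ?dvdzz // addr0.
  by rewrite mulrzA_C.
have /dvdzP [e de] : (d %| m0%:Z)%Z by apply: dvdz_gcdr.
have e_neq0 : e != 0.
  by apply: contraTneq m0_gt0 => e0; rewrite -eqn0Ngt -eqz_nat de e0 mul0r.
have xae : x *~ a *~ e = 0.
  have /dvdzP [a' ->] : (d %| a)%Z by apply: dvdz_gcdl.
  by rewrite -mulrzA (proj2 (ord_x _)) // de -mulrA (mulrC d) dvdz_mull.
have xbe : x *~ b *~ e = 0.
  by apply/eqP; rewrite mulrz_eq0_norm; apply/eqP/ann_ab/eqP; rewrite -mulrz_eq0_norm xae.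
have /dvdzP [b' ->] : (d %| b)%Z.
  by rewrite -(dvdz_mul2l e_neq0) -de; apply/ord_x; rewrite mulrC mulrzA.
by exists (b' * u); rewrite mulrC [LHS]mulrzA xd -mulrzA (mulrC u).
Qed.

End Torsion.

Section PrimePowerTorsion.
Variables (A : zmodType) (p : nat).
Hypothesis p_pr : prime p.
Implicit Types (x y : A).

Lemma pfactor_order_dvd x k : (0 < k)%N -> x *+ p ^ k = 0 -> x *+ p ^ k.-1 != 0 ->
  forall t : int, x *~ t = 0 -> ((p ^ k)%N%:Z %| t)%Z.
Proof.
move=> k_gt0 xk xk1 t.
have pk_gt0 : (0 < p ^ k)%N by rewrite expn_gt0 prime_gt0.
have [m0 _ ord_x] := exists_order_dvdz pk_gt0 xk.
have /dvdn_pfactor [//|i le_ik m0_eq] : (m0 %| p ^ k)%N.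
  by have := proj1 (ord_x (p ^ k)%N); rewrite -pmulrn dvdzE; apply.
suff m0_pk : m0 = (p ^ k)%N by rewrite -m0_pk => /ord_x.
rewrite m0_eq; suff -> : i = k by []; apply/eqP; rewrite eqn_leq le_ik leqNgt.
rewrite -(prednK k_gt0) ltnS; apply: contra xk1 => le_ik1.
by apply/eqP; rewrite pmulrn; apply/ord_x; rewrite dvdzE m0_eq dvdn_exp2l ?prime_gt0.
Qed.

Lemma cycle_meet_eq0 x y j (m e : int) : y *+ p ^ j.+1 = 0 ->
  ~ (exists t : int, y *+ p ^ j = x *~ t) -> y *~ m = x *~ e -> y *~ m = 0.
Proof.
move=> yj y_notin ym.
have [i le_ij gcd_eq] : exists2 i, (i <= j.+1)%N & gcdz m (p ^ j.+1)%N = (p ^ i)%N%:Z.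
  have /(dvdn_pfactor _ _ p_pr) [i le_ij gcd_eq] := dvdn_gcdr `|m|%N (p ^ j.+1).
  by exists i; rewrite // /gcdz /= gcd_eq.
have [u [v duv]] := Bezoutz m (p ^ j.+1)%N%:Z.
have yi : y *+ p ^ i = x *~ (e * u).
  rewrite pmulrn -gcd_eq -duv mulrzDr.
  rewrite (mulrz_dvd_eq0 yj (t := v * _)) ?dvdz_mull // addr0 (mulrC u m) [LHS]mulrzA ym.
  by rewrite -mulrzA.
case: (ltnP i j.+1) => [lt_ij | le_ji].
  case: y_notin; exists (e * u * (p ^ (j - i))%N%:Z).
  by rewrite mulrzA -yi -pmulrn -mulrnA -expnD subnKC // -ltnS.
apply: (mulrz_dvd_eq0 yj).
have -> : j.+1 = i by apply/eqP; rewrite eqn_leq le_ij le_ji.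
by rewrite -gcd_eq dvdz_gcdl.
Qed.

End PrimePowerTorsion.

Definition power_on (A : zmodType) (D : A -> Prop) (f : A -> A) : Prop :=
  forall x, D x -> exists c : int, f x = x *~ c.

Section UniformPowerMultiplier.
Variables (A : zmodType) (D : A -> Prop) (phi : {additive A -> A}) (p : nat).
Hypotheses (sD : is_subgroup D) (phi_power : power_on D phi) (p_pr : prime p).

(* Induction on the order p^j of y: if p^(j-1) y lies in <x>, then y minus a
   suitable multiple of x has smaller order; otherwise <y> meets <x> trivially
   and comparing the multipliers of y, x and x + y gives the claim. *)
Lemma power_on_pfactor_uniform x k (a : int) : D x -> (0 < k)%N ->
    x *+ p ^ k = 0 -> x *+ p ^ k.-1 != 0 -> phi x = x *~ a ->
  forall y, D y -> y *+ p ^ k = 0 -> phi y = y *~ a.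
Proof.
move=> Dx k_gt0 xk xk1 phix; have ord_x := pfactor_order_dvd p_pr k_gt0 xk xk1.
suff phi_pj j y : D y -> (j <= k)%N -> y *+ p ^ j = 0 -> phi y = y *~ a.
  by move=> y Dy; apply: phi_pj.
elim: j y => [|j IHj] y Dy le_jk yj.
  by move: yj; rewrite expn0 mulr1n => ->; rewrite raddf0 mul0rz.
have yk : y *+ p ^ k = 0 by apply: mulrn_dvd_eq0 yj _; rewrite dvdn_exp2l.
have [[t yt] | y_notin] := classic (exists t : int, y *+ p ^ j = x *~ t).
  have /dvdzP [u tu] : ((p ^ k.-1)%N%:Z %| t)%Z.
    have p_neq0 : p%:Z != 0 by rewrite eqz_nat -lt0n prime_gt0.
    rewrite -(dvdz_mul2r p_neq0) -PoszM -expnSr prednK //; apply: ord_x.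
    by rewrite mulrzA -yt -pmulrn -mulrnA -expnSr.
  set s := u * (p ^ (k.-1 - j))%N%:Z.
  have y's_pj : (y - x *~ s) *+ p ^ j = 0.
    rewrite mulrnBl yt pmulrn -mulrzA -mulrzBr /s -mulrA -PoszM -expnD subnK.
      by rewrite -tu subrr mulr0z.
    by rewrite -ltnS prednK.
  have Dy's : D (y - x *~ s) by apply: subgroupB => //; apply: subgroupMz.
  have := IHj _ Dy's (ltnW le_jk) y's_pj.
  rewrite raddfB raddfMz phix => /eqP; rewrite subr_eq => /eqP ->.
  by rewrite mulrzBl -!mulrzA (mulrC s a) subrK.
have [b phiy] := phi_power Dy; have [c phixy] := phi_power (subgroupD sD Dx Dy).
have bc_ca : y *~ (b - c) = x *~ (c - a).
  move: phixy; rewrite raddfD phix phiy mulrzDl !mulrzBr => phixy.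
  by apply/eqP; rewrite subr_eq addrAC eq_sym subr_eq -phixy addrC.
have yb_c : y *~ (b - c) = 0 := cycle_meet_eq0 p_pr yj y_notin bc_ca.
have ya_c : y *~ (c - a) = 0.
  by apply: (mulrz_dvd_eq0 yk); apply: ord_x; rewrite -bc_ca.
by move/eqP: ya_c; move/eqP: yb_c; rewrite phiy !mulrzBr !subr_eq0 => /eqP -> /eqP.
Qed.

End UniformPowerMultiplier.

Definition acts_by (A : zmodType) (D : A -> Prop) (f : A -> A) (n r : nat) : Prop :=
  forall y, D y -> y *+ n = 0 -> f y = y *+ r.

Lemma mulrz_modz (A : zmodType) (x : A) n (a : int) : (0 < n)%N -> x *+ n = 0 ->
  x *~ a = x *+ `|(a %% n%:Z)%Z|%N.
Proof.
move=> n_gt0 xn; rewrite pmulrn gez0_abs ?modz_ge0 ?eqz_nat -?lt0n //.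
rewrite {1}(divz_eq a n%:Z) mulrzDr (mulrz_dvd_eq0 xn (t := _ * _)) ?add0r //.
exact: dvdz_mull.
Qed.

Lemma pfactor_order_eqmod (A : zmodType) (x : A) p k a b : prime p -> (0 < k)%N ->
  x *+ p ^ k = 0 -> x *+ p ^ k.-1 != 0 -> x *+ a = x *+ b -> (a = b %[mod p ^ k])%N.
Proof.
move=> p_pr k_gt0 xk xk1; wlog le_ba : a b / (b <= a)%N.
  by move=> wlog_ab; case: (leqP b a) => [|/ltnW] /wlog_ab // ab /esym /ab.
move=> xab; apply/eqP; rewrite eqn_mod_dvd // -(@dvdzE (p ^ k)%N (a - b)%N).
by apply: (pfactor_order_dvd p_pr k_gt0 xk xk1); rewrite -pmulrn mulrnBr // xab subrr.
Qed.

Section DivisibleExactOrder.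
Variables (A : zmodType) (D : A -> Prop) (p : nat).
Hypothesis sD : is_subgroup D.

Lemma exists_order_p y k : D y -> y != 0 -> y *+ p ^ k = 0 ->
  exists z, [/\ D z, z != 0 & z *+ p = 0].
Proof.
elim: k y => [|k IHk] y Dy y_neq0 yk; first by move: y_neq0; rewrite -yk expn0 mulr1n eqxx.
have [yp | yp_neq0] := eqVneq (y *+ p) 0; first by exists y.
by apply: (IHk (y *+ p)) => //; [apply: subgroupMn | rewrite -mulrnA -expnS].
Qed.

Lemma exists_exact_pfactor_order z k : divisible D -> (0 < p)%N -> (0 < k)%N ->
  D z -> z != 0 -> z *+ p = 0 -> exists u, [/\ D u, u *+ p ^ k = 0 & u *+ p ^ k.-1 != 0].
Proof.
move=> dD p_gt0 k_gt0 Dz z_neq0 zp.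
have [u Du uz] : exists2 u, D u & u *+ (p ^ k.-1)%N = z.
  by apply: dD => //; rewrite expn_gt0 p_gt0.
exists u; split=> //; last by rewrite uz.
by rewrite -(prednK k_gt0) expnSr mulrnA; move: zp; rewrite -uz; apply.
Qed.

End DivisibleExactOrder.

Section PadicMultiplier.
Variables (A : zmodType) (D : A -> Prop) (phi : {additive A -> A}).
Hypotheses (sD : is_subgroup D) (dD : divisible D) (phi_power : power_on D phi).

(* When D has no element of order p, every residue works; 0 is chosen so that
   the sequence stays coherent. *)
Definition pmultiplier (p k : nat) : nat :=
  if excluded_middle_informative (exists z, [/\ D z, z != 0 & z *+ p = 0])
  then epsilon (inhabits 0%N) (fun r => (r < p ^ k)%N /\ acts_by D phi (p ^ k) r)
  else 0%N.

Lemma exists_pfactor_residue p k : prime p ->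
  exists r, (r < p ^ k)%N /\ acts_by D phi (p ^ k) r.
Proof.
move=> p_pr; have pk_gt0 : (0 < p ^ k)%N by rewrite expn_gt0 prime_gt0.
have [[y [Dy y_neq0 yk]] | Dpk0] := classic (exists y, [/\ D y, y != 0 & y *+ p ^ k = 0]).
  have [z [Dz z_neq0 zp]] := exists_order_p sD Dy y_neq0 yk.
  have k_gt0 : (0 < k)%N.
    by case: k yk {pk_gt0} => [|//]; rewrite expn0 mulr1n => /eqP; rewrite (negbTE y_neq0).
  have [u [Du uk uk1]] := exists_exact_pfactor_order dD (prime_gt0 p_pr) k_gt0 Dz z_neq0 zp.
  have [a phiu] := phi_power Du.
  have phi_pk := power_on_pfactor_uniform sD phi_power p_pr Du k_gt0 uk uk1 phiu.
  exists `|(a %% (p ^ k)%N%:Z)%Z|%N; split.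
    by rewrite -ltz_nat gez0_abs ?modz_ge0 ?ltz_pmod ?eqz_nat -?lt0n.
  by move=> y' Dy' y'k; rewrite phi_pk // (mulrz_modz _ pk_gt0 y'k).
exists 0%N; split=> // y' Dy' y'k.
have [-> | y'_neq0] := eqVneq y' 0; first by rewrite raddf0 mul0rn.
by case: Dpk0; exists y'.
Qed.

Lemma pmultiplier_spec p k : prime p ->
  (pmultiplier p k < p ^ k)%N /\ acts_by D phi (p ^ k) (pmultiplier p k).
Proof.
move=> p_pr; rewrite /pmultiplier; case: excluded_middle_informative => [Dp | Dp0].
  exact: epsilon_spec (exists_pfactor_residue k p_pr).
split; first by rewrite expn_gt0 prime_gt0.
move=> y Dy yk; have [-> | y_neq0] := eqVneq y 0; first by rewrite raddf0 mul0rn.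
by case: Dp0; exact: (exists_order_p sD Dy y_neq0 yk).
Qed.

Lemma pmultiplier_padic p : prime p -> is_padic p (pmultiplier p).
Proof.
move=> p_pr k; have [ltk actk] := pmultiplier_spec k p_pr; split=> //.
have [_ actk1] := pmultiplier_spec k.+1 p_pr.
have [-> | k_gt0] := posnP k; first by rewrite expn0 !modn1.
have [[z [Dz z_neq0 zp]] | Dp0] := classic (exists z, [/\ D z, z != 0 & z *+ p = 0]).
  have [u [Du uk uk1]] := exists_exact_pfactor_order dD (prime_gt0 p_pr) k_gt0 Dz z_neq0 zp.
  apply: (pfactor_order_eqmod p_pr k_gt0 uk uk1).
  have uSk : u *+ p ^ k.+1 = 0 by apply: mulrn_dvd_eq0 uk _; rewrite dvdn_exp2l.
  by rewrite -actk1 // -actk.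
by rewrite /pmultiplier; case: excluded_middle_informative.
Qed.

End PadicMultiplier.

Section ChineseMultiplier.
Variables (A : zmodType) (D : A -> Prop) (f : {additive A -> A}).
Hypothesis sD : is_subgroup D.

Lemma acts_by_chinese q m c1 c2 : coprime q m ->
  acts_by D f q c1 -> acts_by D f m c2 -> acts_by D f (q * m) (chinese q m c1 c2).
Proof.
move=> qm_coprime act1 act2 y Dy yqm; set c := chinese q m c1 c2.
set e := chinese q m 1 0; set y1 := y *+ e.
have y1q : y1 *+ q = 0.
  rewrite -mulrnA; apply: (mulrn_dvd_eq0 yqm).
  by rewrite mulnC dvdn_mul // /dvdn chinese_modr // mod0n.
have y2m : (y - y1) *+ m = 0.
  rewrite mulrnBl -mulrnA (mulrn_eqmod yqm (b := m)) ?subrr //; apply/eqP.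
  rewrite chinese_remainder // modnMl modnn eqxx andbT.
  by rewrite -modnMml chinese_modl // modnMml mul1n.
have Dy1 : D y1 by apply: subgroupMn.
have Dy2 : D (y - y1) by apply: subgroupB.
have c_c2 : (y - y1) *+ c2 = (y - y1) *+ c by apply/esym/(mulrn_eqmod y2m)/chinese_modr.
have c_c1 : y1 *+ c1 = y1 *+ c by apply/esym/(mulrn_eqmod y1q)/chinese_modl.
by rewrite -[in LHS](subrK y1 y) raddfD act2 // act1 // c_c2 c_c1 -mulrnDl subrK.
Qed.

Lemma acts_by_crt (alpha : nat -> nat -> nat) :
    (forall p k, prime p -> acts_by D f (p ^ k) (alpha p k)) ->
  forall n, (0 < n)%N -> exists c, acts_by D f n c /\
    forall p, prime p -> (p %| n)%N -> (c = alpha p (logn p n) %[mod p ^ logn p n])%N.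
Proof.
move=> act_pk; elim/ltn_ind=> n IHn n_gt0.
have [n_le1 | n_gt1] := leqP n 1.
  have -> : n = 1%N by apply/eqP; rewrite eqn_leq n_le1.
  exists 0%N; split=> [y _ | p p_pr]; last by rewrite dvdn1 => /eqP p1; rewrite p1 in p_pr.
  by rewrite mulr1n => ->; rewrite raddf0 mul0rn.
set p := pdiv n; have p_pr : prime p := pdiv_prime n_gt1.
have [m p_m_coprime n_eq] := pfactor_coprime p_pr n_gt0; set v := logn p n in n_eq.
have m_gt0 : (0 < m)%N by move: n_gt0; rewrite n_eq muln_gt0 => /andP [].
have v_gt0 : (0 < v)%N by rewrite logn_gt0 mem_primes p_pr n_gt0 pdiv_dvd.
have m_lt_n : (m < n)%N by rewrite n_eq ltn_Pmulr // -(expn0 p) ltn_exp2l ?prime_gt1.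
have [c2 [act2 c2_mod]] := IHn m m_lt_n m_gt0.
have coprime_pv_m : coprime (p ^ v) m by rewrite coprimeXl.
exists (chinese (p ^ v) m (alpha p v) c2); split.
  by rewrite n_eq mulnC; apply: acts_by_chinese => //; apply: act_pk.
move=> q q_pr q_dvd_n; have [-> | q_neq_p] := eqVneq q p; first by rewrite chinese_modl.
have q_dvd_m : (q %| m)%N.
  move: q_dvd_n; rewrite n_eq Euclid_dvdM // Euclid_dvdX // (dvdn_prime2 q_pr p_pr).
  by rewrite (negbTE q_neq_p) orbF.
have -> : logn q n = logn q m.
  rewrite n_eq lognM ?expn_gt0 ?(prime_gt0 p_pr) // lognX (logn_prime q p_pr).
  by rewrite (negbTE q_neq_p) muln0 addn0.
rewrite -(c2_mod q q_pr q_dvd_m) -(modn_dvdm _ (pfactor_dvdnn q m)).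
by rewrite chinese_modr // modn_dvdm // pfactor_dvdnn.
Qed.

End ChineseMultiplier.

Lemma fin_quot_divisible_sub (A : zmodType) (X Y : A -> Prop) :
  is_subgroup X -> is_subgroup Y -> divisible Y -> fin_quot Y X -> forall y, Y y -> X y.
Proof.
move=> sX sY dY [s cover] y Yy; set N := size s.
have [w Yw wy] := dY y N`! Yy (fact_gt0 N).
have [pick pickP] : exists pick : nat -> A, forall i, pick i \in s /\ X (w *+ i - pick i).
  apply: (choice (fun i a => a \in s /\ X (w *+ i - a))) => i.
  by have [a a_s Xa] := cover _ (subgroupMn sY i Yw); exists a.
have [i [j [lt_ij le_jN pick_ij]]] : exists i j, [/\ (i < j)%N, (j <= N)%N & pick i = pick j].
  have /(uniqPn 0) [i [j []]] : ~~ uniq (map pick (iota 0 N.+1)).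
    apply/negP => /uniq_leq_size le_N.
    have : (size (map pick (iota 0 N.+1)) <= size s)%N.
      by apply: le_N => _ /mapP [k _ ->]; case: (pickP k).
    by rewrite size_map size_iota ltnn.
  rewrite size_map size_iota ltnS => lt_ij le_jN.
  have le_iN : (i <= N)%N := ltnW (leq_trans lt_ij le_jN).
  rewrite !(nth_map 0%N) ?size_iota ?ltnS // !nth_iota ?ltnS // !add0n => pick_ij.
  by exists i, j.
have Xji : X (w *+ (j - i)).
  rewrite mulrnBr; last exact: ltnW.
  have := subgroupB sX (proj2 (pickP j)) (proj2 (pickP i)).
  by rewrite pick_ij opprB addrA subrK.
have /dvdnP [q N_eq] : (j - i %| N`!)%N.
  by apply: dvdn_fact; rewrite subn_gt0 lt_ij leq_subLR (leq_trans le_jN) ?leq_addl.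
by rewrite -wy N_eq mulnC mulrnA; apply: subgroupMn.
Qed.

Lemma divisible_chain (A : zmodType) (D : A -> Prop) x : divisible D -> D x ->
  exists xs : nat -> A, xs 0%N = x /\ forall k, D (xs k) /\ xs k.+1 *+ k.+1 = xs k.
Proof.
move=> dD Dx.
have [root rootP] : exists root : nat * A -> A,
    forall ky, D ky.2 -> D (root ky) /\ root ky *+ ky.1.+1 = ky.2.
  apply: (choice (fun ky r => D ky.2 -> D r /\ r *+ ky.1.+1 = ky.2)) => -[k y].
  have [Dy | nDy] := classic (D y); last by exists 0 => /nDy.
  by have [r Dr ry] := dD y k.+1 Dy (ltn0Sn k); exists r.
pose fix xs k := if k is k'.+1 then root (k', xs k') else x.
have Dxs k : D (xs k) by elim: k => [|k IHk] //=; apply: (proj1 (rootP (k, xs k) IHk)).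
by exists xs; split=> // k; split=> //; apply: (proj2 (rootP (k, xs k) (Dxs k))).
Qed.

(* X is the union of the cycles <x_k> of a division chain x_0 = x, x_k = (k+1) x_(k+1). *)
Lemma divisible_locally_cyclic_hull (A : zmodType) (D : A -> Prop) x :
    divisible D -> D x ->
  exists X : A -> Prop, [/\ is_subgroup X, divisible X, X x &
    forall u v, X u -> X v -> exists g (a b : int), [/\ D g, u = g *~ a & v = g *~ b]].
Proof.
move=> dD Dx; have [xs [xs0 xsP]] := divisible_chain dD Dx.
have lift k K : (k <= K)%N -> exists q, xs k = xs K *+ q.
  move/subnKC <-; elim: (K - k)%N => [|j [q xq]]; first by exists 1%N; rewrite addn0.
  exists ((k + j).+1 * q)%N; rewrite addnS mulrnA.
  by have [_ ->] := xsP (k + j)%N.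
have lift_z k (z : int) K : (k <= K)%N -> exists z', xs k *~ z = xs K *~ z'.
  by move/lift => [q ->]; exists (q%:Z * z); rewrite pmulrn -mulrzA.
pose X u := exists k (z : int), u = xs k *~ z.
have common u v : X u -> X v -> exists K (a b : int), u = xs K *~ a /\ v = xs K *~ b.
  move=> [k1 [z1 ->]] [k2 [z2 ->]].
  have [a ->] := lift_z k1 z1 (k1 + k2)%N (leq_addr _ _).
  by have [b ->] := lift_z k2 z2 (k1 + k2)%N (leq_addl _ _); exists (k1 + k2)%N, a, b.
exists X; split.
- split=> [|u v Xu Xv]; first by exists 0%N, 0; rewrite mulr0z.
  by have [K [a [b [-> ->]]]] := common u v Xu Xv; exists K, (a - b); rewrite mulrzBr.
- move=> _ M [k [z ->]] M_gt0; set K := (M * k.+1).-1.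
  have KS : K.+1 = (M * k.+1)%N by rewrite prednK // muln_gt0 M_gt0.
  have [q xq] : exists q, xs k = xs K *+ q by apply: lift; rewrite -ltnS KS leq_pmull.
  exists (xs K.+1 *~ ((k.+1 * q)%N%:Z * z)); first by exists K.+1, ((k.+1 * q)%N%:Z * z).
  have [_ xsK] := xsP K.
  by rewrite xq -xsK KS !pmulrn -!mulrzA !PoszM mulrC !mulrA.
- by exists 0%N, 1; rewrite xs0 mulr1z.
- move=> u v Xu Xv; have [K [a [b [-> ->]]]] := common u v Xu Xv.
  by exists (xs K), a, b; split=> //; case: (xsP K).
Qed.

Lemma raddf_mulz_cycle (A : zmodType) (phi : {additive A -> A}) h n x (a b : int) :
  (0 < n)%N -> h *+ n = 0 -> x = h *~ a -> phi x = h *~ b -> exists c : int, phi x = x *~ c.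
Proof.
move=> n_gt0 hn xa phixb; rewrite phixb xa.
apply: (cycle_mulz_of_ann n_gt0 hn) => j.
by rewrite -xa -phixb -raddfMn => ->; rewrite raddf0.
Qed.

Section PowerEndomorphism.
Variables (A : zmodType) (D : A -> Prop) (phi : {additive A -> A}).
Hypotheses (dD : divisible D) (pD : periodic D).

Lemma inertial_power_on : inertial phi -> power_on D phi.
Proof.
move=> phi_in x Dx; have [X [sX dX Xx Xcycle]] := divisible_locally_cyclic_hull dD Dx.
pose Y y := exists u v, [/\ X u, X v & y = phi u + v].
have sY : is_subgroup Y.
  split; first by exists 0, 0; rewrite raddf0 addr0; split=> //; apply: subgroup0.
  move=> _ _ [u1 [v1 [Xu1 Xv1 ->]]] [u2 [v2 [Xu2 Xv2 ->]]].
  exists (u1 - u2), (v1 - v2); split; try exact: subgroupB.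
  by rewrite raddfB opprD addrACA.
have dY : divisible Y.
  move=> _ M [u [v [Xu Xv ->]]] M_gt0.
  have [u' Xu' <-] := dX u M Xu M_gt0; have [v' Xv' <-] := dX v M Xv M_gt0.
  by exists (phi u' + v'); [exists u', v' | rewrite mulrnDl raddfMn].
have Xphix : X (phi x).
  apply: (fin_quot_divisible_sub sX sY dY (phi_in X sX)).
  by exists x, 0; rewrite addr0; split=> //; apply: subgroup0.
have [g [a [b [Dg xg phixg]]]] := Xcycle _ _ Xx Xphix.
have [n n_gt0 gn] := pD Dg.
exact: raddf_mulz_cycle n_gt0 gn xg phixg.
Qed.

Lemma left_inertial_power_on : left_inertial phi -> power_on D phi.
Proof.
move=> phi_lin x Dx; have [X [sX dX Xx Xcycle]] := divisible_locally_cyclic_hull dD Dx.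
pose Z y := X y /\ image_of phi X y.
have sZ : is_subgroup Z.
  split; first by split; [apply: subgroup0 | exists 0; [apply: subgroup0 | rewrite raddf0]].
  move=> y1 y2 [Xy1 [u1 Xu1 y1u]] [Xy2 [u2 Xu2 y2u]].
  by split; [apply: subgroupB | exists (u1 - u2); [apply: subgroupB | rewrite raddfB y1u y2u]].
have [_ [u Xu xu]] := fin_quot_divisible_sub sZ sX dX (phi_lin X sX) Xx.
have [g [a [b [Dg ug xg]]]] := Xcycle _ _ Xu Xx.
have [n n_gt0 gn] := pD Dg.
have phign : phi g *+ n = 0 by rewrite -raddfMn gn raddf0.
apply: (raddf_mulz_cycle (h := phi g) n_gt0 phign (a := a)).
  by rewrite xu ug raddfMz.
by rewrite xg raddfMz.
Qed.

End PowerEndomorphism.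

Theorem lemma3p4 (A : zmodType) (D : A -> Prop) (phi : {additive A -> A}) :
  is_subgroup D -> divisible D -> periodic D ->
  (inertial phi \/ left_inertial phi) ->
  (forall x, D x -> D (phi x)) /\
  exists alpha : nat -> nat -> nat,
    (forall p, prime p -> is_padic p (alpha p)) /\
    (forall x, D x -> padic_mult alpha x (phi x)).
Proof.
move=> sD dD pD phi_inertial.
have phi_power : power_on D phi.
  by case: phi_inertial; [apply: inertial_power_on | apply: left_inertial_power_on].
split; first by move=> x Dx; have [c ->] := phi_power x Dx; apply: subgroupMz.
exists (pmultiplier D phi); split=> [p p_pr | x Dx]; first exact: pmultiplier_padic.
have act_pk p k : prime p -> acts_by D phi (p ^ k) (pmultiplier D phi p k).
  by move=> p_pr; case: (pmultiplier_spec sD dD phi_power k p_pr).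
have [n n_gt0 xn] := pD x Dx.
have [c [act_n c_mod]] := acts_by_crt sD act_pk n_gt0.
by exists n; split=> //; exists c; split=> //; apply: act_n.
Qed.
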